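(* Let $X$ be an infinite-dimensional separable (real or complex) Banach space and let $A$ be an operator in $X$ satisfying all hypotheses of Theorem 2.1: $A$ is densely defined, $A^r$ is closed for all $r\ge1$, and there are a dense set $X_0\subset\bigcap_n D(A^n)$ and $B:X_0\to X_0$ with $ABx=x$, and $\sum_{n\ge1}A^nx$, $\sum_{n\ge1}B^nx$ unconditionally convergent for all $x\in X_0$. If $A$ is injective and $A^{-1}$ is a bounded linear operator on $X$, then $A^{-1}$ is frequently hypercyclic.
   Context: A series $\sum_k x_k$ converges unconditionally if for every $\varepsilon>0$ there is $N$ with $\|\sum_{k\in F}x_k\|<\varepsilon$ for every finite $F\subset\mathbb{N}$ disjoint from $\{1,\dots,N\}$. An operator $T$ is frequently hypercyclic if there is $f\in D(T)$ with $T^nf\in D(T)$ for all $n\ge1$ such that for every non-empty open $U\subset X$ the set $\{n: T^nf\in U\}$ has positive lower density, where the lower density of $E\subset\mathbb{N}$ is $\liminf_{N}\#(E\cap\{1,\dots,N\})/N$. *)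

From HB Require Import structures.
From mathcomp Require Import all_boot all_order all_algebra.
From mathcomp Require Import all_classical all_reals all_analysis.
From mathcomp.real_closed Require Import complex.
Import Order.TTheory GRing.Theory Num.Theory.
Import numFieldNormedType.Exports.

Set Implicit Arguments.
Unset Strict Implicit.
Unset Printing Implicit Defensive.

Local Open Scope classical_set_scope.
Local Open Scope ring_scope.

Definition scal (R : realType) (b : bool) : numFieldType :=
  if b then (complex R : numFieldType) else (R : numFieldType).

Section Defs.
Variables (K : numFieldType) (X : normedModType K).

Definition separable_space : Prop :=
  exists S : set X, countable S /\ dense S.

Definition infinite_dimensional : Prop :=
  ~ exists s : seq X, forall x : X,
      exists c : nat -> K, x = \sum_(i < size s) c i *: s`_i.

(* A (possibly unbounded) linear operator in X: a linear subspace D = D(A)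
   and a map A, linear on D (values of A outside D are irrelevant). *)
Definition linear_operator (D : set X) (A : X -> X) : Prop :=
  [/\ D 0,
      (forall x y, D x -> D y -> D (x + y) /\ A (x + y) = A x + A y) &
      (forall (a : K) x, D x -> D (a *: x) /\ A (a *: x) = a *: A x)].

Definition dom_pow (D : set X) (A : X -> X) (n : nat) : set X :=
  [set x | forall k, (k < n)%N -> D (iter k A x)].

Definition closed_operator (D : set X) (A : X -> X) : Prop :=
  closed [set p : X * X | D p.1 /\ A p.1 = p.2].

(* Unconditional convergence of sum_{k >= 1} u k (Cauchy form, as in the
   paper): finite sets F of indices are given by duplicate-free lists. *)
Definition uncond_conv (u : nat -> X) : Prop :=
  forall eps : K, 0 < eps -> exists N : nat,
    forall s : seq nat, uniq s -> all (fun k => (N < k)%N) s ->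
      `| \sum_(k <- s) u k | < eps.

End Defs.

Definition lower_density (R : realType) (E : set nat) : \bar R :=
  limn_einf (fun N : nat =>
    (((\sum_(1 <= n < N.+1) (`[< E n >] : nat))%N)%:R / N%:R : R)%:E).

Definition freq_hypercyclic (R : realType) (K : numFieldType)
    (X : normedModType K) (D : set X) (T : X -> X) : Prop :=
  exists f : X, D f /\ (forall n, (1 <= n)%N -> D (iter n T f)) /\
    forall U : set X, open U -> U !=set0 ->
      (0 < lower_density R [set n | U (iter n T f)])%E.

(* The theorem is the Frequent Hypercyclicity Criterion for T = A^-1: on X0,
   T^n x = B^n x, and A^k x is a backward T-orbit of x; both series converge
   unconditionally.

   For the criterion, pick y_0, y_1, ... in X0 such that every point is approximated
   by some y_l with l arbitrarily large, and pairwise disjoint sets E_l of positive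
   lower density whose elements exceed N_l and are more than N_l and N_j apart
   (n in E_l, m in E_j, n <> m), where beyond N_l all tails of the series attached
   to y_0, ..., y_l are smaller than eps_l.  Put f = sum_l sum_(n in E_l) A^n y_l.
   For n in E_l, T^n f is y_l plus pieces of tails of the series T^k y_j and A^k y_j,
   hence within O(l eps_l) <= 1/(l+1) of y_l.  So the visits of the orbit of f to a
   ball around y_l contain E_l.

   The sets E_l are the odd multiples of a fast-growing modulus P_l, minus those
   within N_k of an odd multiple of P_k for some k > l; the removed part is at most
   half of the odd multiples, so E_l still has lower density >= 1/(8 P_l). *)

From HB Require Import structures.
From mathcomp Require Import all_boot all_order all_algebra.
From mathcomp Require Import all_classical all_reals all_analysis.
From mathcomp.real_closed Require Import complex.
From mathcomp Require Import zify.
Import Order.TTheory GRing.Theory Num.Theory.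
Import numFieldNormedType.Exports.

Set Implicit Arguments.
Unset Strict Implicit.
Unset Printing Implicit Defensive.

Local Open Scope classical_set_scope.
Local Open Scope ring_scope.

Lemma lower_density_gt0 (R : realType) (E : set nat) (c N0 : nat) :
  (0 < c)%N ->
  (forall N, (N0 <= N)%N ->
     (N <= c * \sum_(1 <= n < N.+1) (`[< E n >] : nat))%N) ->
  (0 < lower_density R E)%E.
Proof.
move=> c_gt0 hE; rewrite /lower_density limn_einf_lim.
set u := (fun N : nat => _).
have -> : limn (einfs u) = ereal_sup (range (einfs u)).
  by apply: cvg_lim => //; exact: cvg_einfs_sup.
apply: (@lt_le_trans _ _ ((c%:R : R)^-1)%:E).
  by rewrite lte_fin invr_gt0 ltr0n.
apply: (@le_trans _ _ (einfs u N0.+1)); last by apply: ereal_sup_ubound; exists N0.+1.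
apply/ereal_infP => _ [N /= N0N <-]; rewrite /u lee_fin.
have N_gt0 : (0 < N)%N by apply: leq_ltn_trans N0N.
rewrite ler_pdivlMr ?ltr0n // mulrC ler_pdivrMr ?ltr0n // -natrM ler_nat mulnC.
exact: hE (ltnW N0N).
Qed.

Lemma le_lower_density (R : realType) (E F : set nat) :
  E `<=` F -> (lower_density R E <= lower_density R F)%E.
Proof.
move=> EF; rewrite /lower_density !limn_einf_lim.
apply: lee_lim; [exact: is_cvg_einfs | exact: is_cvg_einfs |].
apply: nearW => N; apply: le_ereal_inf_tmp => _ [k /= Nk <-].
apply: le_trans (ereal_inf_lbound _) _; first by exists k.
rewrite lee_fin ler_wpM2r ?invr_ge0 // ler_nat; apply: leq_sum => n _.
by case: (asboolP (E n)) => // /EF /asboolP ->.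
Qed.

Section NatCounting.
Local Open Scope nat_scope.

Lemma sum_eqmod d r L : r < d ->
  \sum_(n < L) (n %% d == r) = (L + (d - 1 - r)) %/ d.
Proof.
move=> rd; elim: L => [|L IH]; first by rewrite big_ord0 add0n divn_small //; lia.
rewrite big_ord_recr /= IH addSn divnS; last lia.
have -> : (L + (d - 1 - r)).+1 = L + (d - r) by lia.
rewrite addnC; congr (_ + _); rewrite /dvdn -modnDml.
have := ltn_pmod L (leq_ltn_trans (leq0n r) rd); move: (L %% d) => x xd.
case: (ltnP x r) => xr.
  by rewrite modn_small; [apply/eqP/eqP; lia | lia].
rewrite (_ : x + (d - r) = x - r + d); last lia.
by rewrite modnDr modn_small; [apply/eqP/eqP; lia | lia].
Qed.

Lemma sum_distn_leq (m b L : nat) : \sum_(n < L) (`|n - m| <= b) <= 2 * b + 1.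
Proof.
suff -> : \sum_(n < L) (`|n - m| <= b) = minn L (m + b + 1) - minn L (m - b) by lia.
elim: L => [|L IH]; first by rewrite big_ord0; lia.
by rewrite big_ord_recr /= IH; case: (leqP `|L - m| b) => /=; lia.
Qed.

Lemma sum_leq_geometric K N (y : nat -> nat) :
  (forall k, k < K -> 2 ^ k.+1 * y k <= N) -> \sum_(k < K) y k <= N.
Proof.
move=> hy; suff : 2 ^ K * \sum_(k < K) y k + N <= 2 ^ K * N.
  by have := expn_gt0 2 K; nia.
elim: K hy => [|K IH] hy; first by rewrite big_ord0; lia.
rewrite big_ord_recr /= expnS.
have := IH (fun k kK => hy k (ltnW kK)); have := hy K (ltnSn K); rewrite expnS.
move: (2 ^ K) (\sum_(i < K) y i) (y K) => e S z; nia.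
Qed.

End NatCounting.

Section SeparatedLabelling.
Local Open Scope nat_scope.
Variable a : nat -> nat.

(* The factor [2 ^ (k + 4) * (2 * a k + 1)] makes the points removed from the odd
   multiples of [modulus j] because of all [k > j] a fraction at most 1/2 of them
   (see [blocked_small] and [sum_leq_geometric]). *)
Fixpoint modulus k :=
  2 ^ (k + 4) * (2 * a k + 1) * (if k is k'.+1 then modulus k' else 1).

Lemma modulus_gt0 k : 0 < modulus k.
Proof. by elim: k => [|k IH] /=; rewrite !muln_gt0 ?expn_gt0 ?IH ?addn1. Qed.

Lemma modulus_grow j k : j < k -> 2 ^ (k + 4) * (2 * a k + 1) * modulus j <= modulus k.
Proof.
elim: k => [//|k IH]; rewrite ltnS leq_eqVlt => /orP[/eqP -> //|/IH jk] /=.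
rewrite leq_mul2l (leq_trans _ jk) ?orbT //.
by rewrite -[X in X <= _]mul1n leq_mul2r muln_gt0 expn_gt0 /=; lia.
Qed.

Lemma modulus_ge k : 2 * a k + k + 1 <= modulus k.
Proof.
have : k + 4 < 2 ^ (k + 4) by apply: ltn_expl.
have : 0 < (if k is k'.+1 then modulus k' else 1) by case: k => [|k] //; exact: modulus_gt0.
rewrite /=; case: k => [|k] /=; nia.
Qed.

Lemma dvdn_modulus j k : j < k -> 2 * modulus j %| modulus k.
Proof.
elim: k => [//|k IH]; rewrite ltnS leq_eqVlt => /orP[/eqP ->|/IH jk] /=.
  by apply: dvdn_mul => //; apply: dvdn_mulr; rewrite addnS expnS dvdn_mulr.
exact: dvdn_trans jk (dvdn_mull _ _).
Qed.

Definition oddmul k n := n %% (2 * modulus k) == modulus k.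

Lemma oddmul_ge k n : oddmul k n -> modulus k <= n.
Proof. by move/eqP <-; apply: leq_mod. Qed.

Lemma oddmul_dvd k n : oddmul k n -> modulus k %| n.
Proof.
move/eqP => hn; rewrite (divn_eq n (2 * modulus k)) hn dvdn_add //.
by rewrite mulnA dvdn_mull.
Qed.

Lemma oddmul_disjoint j k n : j < k -> oddmul j n -> oddmul k n -> False.
Proof.
move=> jk hj /oddmul_dvd hk; have := dvdn_trans (dvdn_modulus jk) hk.
by move: hj; rewrite /oddmul /dvdn => /eqP ->; have := modulus_gt0 j; lia.
Qed.

Lemma eqmod_leq_distn d n m : n = m %[mod d] -> n != m -> d <= `|n - m|.
Proof.
move=> nm_mod nm; case: (ltngtP n m) => [lt_nm|lt_mn|eq_nm]; last by rewrite eq_nm eqxx in nm.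
  rewrite (distnEr (ltnW lt_nm)) dvdn_leq ?subn_gt0 //.
  by rewrite -eqn_mod_dvd ?(ltnW lt_nm) // nm_mod.
rewrite (distnEl (ltnW lt_mn)) dvdn_leq ?subn_gt0 //.
by rewrite -eqn_mod_dvd ?(ltnW lt_mn) // nm_mod.
Qed.

Lemma oddmul_sep_same k n m : oddmul k n -> oddmul k m -> n != m ->
  2 * modulus k <= `|n - m|.
Proof. by move=> /eqP hn /eqP hm; apply: eqmod_leq_distn; rewrite hn hm. Qed.

Lemma oddmul_sep_lt j k n m : j < k -> oddmul j n -> oddmul k m ->
  modulus j <= `|n - m|.
Proof.
move=> jk hj hk; apply: eqmod_leq_distn; last first.
  by apply/eqP => eq_nm; rewrite eq_nm in hj; exact: oddmul_disjoint jk hj hk.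
have dvd_m : modulus j %| m.
  apply: dvdn_trans (oddmul_dvd hk).
  exact: dvdn_trans (dvdn_mull _ _) (dvdn_modulus jk).
by rewrite (eqP (oddmul_dvd hj)) (eqP dvd_m).
Qed.

Definition label_set j n :=
  oddmul j n /\ forall k m, j < k -> oddmul k m -> a k < `|n - m|.

Lemma label_set_gt j n : label_set j n -> a j < n /\ j < n.
Proof. by move=> [/oddmul_ge hn _]; have := modulus_ge j; lia. Qed.

Lemma label_set_disjoint j k n : label_set j n -> label_set k n -> j = k.
Proof.
move=> [hj _] [hk _]; case: (ltngtP j k) => // jk; exfalso.
  exact: oddmul_disjoint jk hj hk.
exact: oddmul_disjoint jk hk hj.
Qed.

Lemma label_set_sep l j n m : label_set l n -> label_set j m -> n != m ->
  a l < `|n - m| /\ a j < `|n - m|.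
Proof.
move=> [hl sepl] [hj sepj] nm; case: (ltngtP l j) => [lj|jl|eq_lj].
- have := sepl j m lj hj; have := oddmul_sep_lt lj hl hj; have := modulus_ge l; lia.
- rewrite distnC; have := sepj l n jl hl; have := oddmul_sep_lt jl hj hl.
  have := modulus_ge j; lia.
- subst j; have := oddmul_sep_same hl hj nm; have := modulus_ge l; lia.
Qed.

Lemma sum_oddmul k M : \sum_(n < M.+1) oddmul k n = (M + modulus k) %/ (2 * modulus k).
Proof.
have := modulus_gt0 k => Pk.
rewrite (sum_eqmod M.+1 (_ : modulus k < 2 * modulus k)); last lia.
by congr (_ %/ _); lia.
Qed.

(* An upper bound for the number of odd multiples of [modulus j] in [0, N] lying
   within [a k] of an odd multiple of [modulus k]. *)
Definition blocked j k N :=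
  (j < k) * ((2 * a k + 1) * \sum_(m < (N + a k).+1) oddmul k m).

Lemma blocked_small j k N : 2 ^ k.+1 * (4 * modulus j * blocked j k N) <= N.
Proof.
rewrite /blocked; case: (ltnP j k) => jk; last by rewrite /= !muln0.
rewrite mul1n sum_oddmul.
have := leq_divM (N + a k + modulus k) (2 * modulus k).
move: ((N + a k + modulus k) %/ (2 * modulus k)) => q hq.
have grow := modulus_grow jk; have ge := modulus_ge k; have Pj := modulus_gt0 j.
case: q hq => [|q] hq; first by rewrite !muln0.
have e4 : 2 ^ (k + 4) = 2 ^ k.+1 * 8 by rewrite (_ : k + 4 = k.+1 + 3) ?expnD //; lia.
rewrite e4 in grow; move: (2 ^ k.+1) grow => t grow.
have h1 : modulus k * q.+1 <= 2 * N by nia.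
have h2 : t * 8 * (2 * a k + 1) * modulus j * q.+1 <= modulus k * q.+1.
  by rewrite leq_mul2r grow orbT.
move: (t * (2 * a k + 1) * modulus j * q.+1) (modulus k * q.+1) => u v; nia.
Qed.


Lemma oddmul_leq_label j N n : n < N.+1 ->
  oddmul j n <= `[< label_set j n >] + \sum_(k < N) \sum_(m < (N + a k).+1)
       ((j < k) && oddmul k m && (`|n - m| <= a k)).
Proof.
move=> nN; case hj: (oddmul j n) => //.
have [hB|hB] := pselect (label_set j n); first by rewrite asboolT.
have [k [m [jk [hk near_nm]]]] :
    exists k m, j < k /\ oddmul k m /\ `|n - m| <= a k.
  apply: contrapT => nex; apply: hB; split => // k m jk hk.
  by rewrite ltnNge; apply/negP => near_nm; apply: nex; exists k, m.
have := oddmul_ge hk; have := modulus_ge k => Pk_ge Pk_le.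
have kN : k < N by lia.
have mN : m < (N + a k).+1 by lia.
rewrite (bigD1 (Ordinal kN)) //= (bigD1 (Ordinal mN)) //= jk hk near_nm /=.
lia.
Qed.

Lemma label_set_count j N : 4 * modulus j <= N ->
  N <= 8 * modulus j * \sum_(1 <= n < N.+1) (`[< label_set j n >] : nat).
Proof.
move=> hN.
have -> : \sum_(1 <= n < N.+1) (`[< label_set j n >] : nat) =
          \sum_(n < N.+1) (`[< label_set j n >] : nat).
  rewrite big_ord_recl /= asboolF ?add0n; last by move=> /label_set_gt [_]; lia.
  by rewrite big_add1 /= big_mkord; apply: eq_bigr => i _.
set S := \sum_(n < N.+1) _.
have h_blocked : 4 * modulus j * \sum_(k < N) blocked j k N <= N.
  rewrite big_distrr; apply: (@sum_leq_geometric _ _ (fun k => 4 * modulus j * blocked j k N)).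
  by move=> k _; exact: blocked_small.
have h_count : \sum_(n < N.+1) oddmul j n <= S + \sum_(k < N) blocked j k N.
  apply: (@leq_trans (\sum_(n < N.+1) (`[< label_set j n >] + \sum_(k < N)
      \sum_(m < (N + a k).+1) ((j < k) && oddmul k m && (`|n - m| <= a k))))).
    by apply: leq_sum => n _; apply: oddmul_leq_label.
  rewrite big_split /= leq_add2l exchange_big /=; apply: leq_sum => k _.
  rewrite exchange_big /= /blocked big_distrr /= big_distrr /=; apply: leq_sum => m _.
  case: (j < k) (oddmul k m) => [] [] /=; rewrite ?mul0n ?mul1n ?muln0 ?muln1;
    try by rewrite big1.
  exact: sum_distn_leq.
rewrite sum_oddmul in h_count.
have h_ceil : N + modulus j < ((N + modulus j) %/ (2 * modulus j)).+1 * (2 * modulus j).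
  by apply: ltn_ceil; rewrite muln_gt0 modulus_gt0.
move: h_blocked h_count h_ceil; move: (\sum_(k < N) _) => x.
move: ((N + modulus j) %/ (2 * modulus j)) => q.
have := modulus_gt0 j; move: (modulus j) hN => p; rewrite -/S; move: S => s.
move=> hN p_gt0 hx hq hceil; have := leq_mul (leqnn (8 * p)) hq; nia.
Qed.

End SeparatedLabelling.

Lemma exists_separated_labelling (R : realType) (a : nat -> nat) :
  exists c : nat -> option nat,
  [/\ forall j, (0 < lower_density R [set n | c n = Some j])%E,
      forall j n, c n = Some j -> (a j < n /\ j < n)%N &
      forall l j n m, c n = Some l -> c m = Some j -> n != m ->
        (a l < `|n - m| /\ a j < `|n - m|)%N].
Proof.
pose c n := if pselect (exists j, label_set a j n) is left h then Some (sval (cid h))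
  else None.
have c_label n j : c n = Some j <-> label_set a j n.
  rewrite /c; case: pselect => [h|nh]; last by split => // hj; case: nh; exists j.
  split=> [[<-]|hj]; first exact: svalP (cid h).
  by congr Some; exact: label_set_disjoint (svalP (cid h)) hj.
exists c; split.
- move=> j; apply: (@lt_le_trans _ _ (lower_density R (label_set a j))).
    apply: (@lower_density_gt0 _ _ _ (4 * modulus a j)); last exact: label_set_count.
    by rewrite muln_gt0 modulus_gt0.
  by apply: le_lower_density => n /c_label.
- by move=> j n /c_label /label_set_gt.
- by move=> l j n m /c_label hl /c_label hj; exact: label_set_sep.
Qed.

Section IterLinear.
Variables (K : numFieldType) (X : normedModType K) (T : {linear X -> X}).

Lemma iter_linear_sum n (I : Type) (r : seq I) (P : pred I) (F : I -> X) :
  iter n T (\sum_(i <- r | P i) F i) = \sum_(i <- r | P i) iter n T (F i).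
Proof. by elim: n => [//|n IH] /=; rewrite IH linear_sum. Qed.

Lemma iter_linear0 n : iter n T 0 = 0.
Proof. by elim: n => //= n ->; rewrite linear0. Qed.

Lemma continuous_iter n : continuous T -> continuous (iter n T).
Proof.
move=> T_cont; elim: n => [|n IH] x //=.
exact: continuous_comp (IH x) (T_cont _).
Qed.

End IterLinear.

Lemma sum_by_label (V : zmodType) (c : nat -> option nat) (F : nat -> nat -> V)
    (r : seq nat) (Q : nat) :
  (forall m j, m \in r -> c m = Some j -> (j < Q)%N) ->
  \sum_(m <- r) (if c m is Some j then F j m else 0) =
  \sum_(j < Q) \sum_(m <- r | c m == Some (j : nat)) F j m.
Proof.
move=> hQ; rewrite (eq_bigr (fun j : 'I_Q => \sum_(m <- r)
   (if c m == Some (j : nat) then F j m else 0))); last by move=> j _; rewrite big_mkcond.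
rewrite exchange_big /= [LHS]big_seq_cond [RHS]big_seq_cond.
apply: eq_bigr => m /andP[mr _]; case cm: (c m) => [j|]; last by rewrite big1.
rewrite (bigD1 (Ordinal (hQ m j mr cm))) //= eqxx big1 ?addr0 // => i ij.
by case: eqP => // -[ji]; move/eqP: ij; case; apply: val_inj.
Qed.

Section OrbitSeries.
Variables (K : numFieldType) (X : completeNormedModType K) (T : {linear X -> X}).
Hypothesis T_cont : continuous T.

Variable G : nat -> nat -> X.
Hypothesis G_back : forall i k, T (G i k.+1) = G i k.

Lemma iter_backward n i m : (n <= m)%N -> iter n T (G i m) = G i (m - n).
Proof.
elim: n => [|n IH] nm; first by rewrite subn0.
by rewrite iterS IH 1?ltnW // -subnSK // G_back.
Qed.

Lemma iter_forward n i m : (m <= n)%N -> iter n T (G i m) = iter (n - m) T (G i 0).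
Proof. by move=> mn; rewrite -{1}(subnK mn) iterD iter_backward // subnn. Qed.

Variable eps : nat -> K.
Hypothesis eps_gt0 : forall k, 0 < eps k.
Hypothesis eps_half : forall k, eps k.+1 *+ 2 <= eps k.

Lemma sum_capped_geometric (w : K) (l q : nat) : 0 <= w ->
  \sum_(j < q) (if (j < l)%N then w else eps j) <= w *+ l + eps l *+ 2.
Proof.
move=> w_ge0.
have [ql|lq] := leqP q l.
  rewrite (eq_bigr (fun=> w)) => [|j _]; last by rewrite (leq_trans (ltn_ord j) ql).
  rewrite sumr_const card_ord; apply: le_trans (ler_wpMn2l w_ge0 ql) _.
  by rewrite lerDl mulrn_wge0 // ltW.
suff tail p : \sum_(j < l + p) (if (j < l)%N then w else eps j) + eps (l + p)%N *+ 2
               <= w *+ l + eps l *+ 2.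
  apply: le_trans (tail (q - l)%N).
  by rewrite subnKC 1?ltnW // lerDl mulrn_wge0 // ltW.
elim: p => [|p IH].
  rewrite addn0 lerD2r (eq_bigr (fun=> w)) ?sumr_const ?card_ord // => j _.
  by rewrite ltn_ord.
rewrite addnS big_ord_recr /= ltnNge leq_addr /=; apply: le_trans IH.
by rewrite -addrA lerD2l [X in _ <= X]mulr2n lerD2l.
Qed.

Variables (a : nat -> nat) (c : nat -> option nat).
Hypothesis G_tail : forall k i, (i <= k)%N -> forall s, uniq s ->
  all (fun n => a k < n)%N s ->
  `|\sum_(n <- s) G i n| < eps k /\ `|\sum_(n <- s) iter n T (G i 0)| < eps k.
Hypothesis label_gt : forall j m, c m = Some j -> (a j < m /\ j < m)%N.
Hypothesis label_sep : forall l j n m, c n = Some l -> c m = Some j -> n != m ->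
  (a l < `|n - m| /\ a j < `|n - m|)%N.

(* [f] is the sum of the [orbit_term m]: each [m] labelled [j] contributes the
   backward-orbit point [G j m], which [T ^ m] brings back to [G j 0]. *)
Definition orbit_term m := if c m is Some j then G j m else 0.

Lemma tail_bound_shift (F : nat -> X) k (r : seq nat) (P : pred nat) (sh : nat -> nat) :
  (forall s, uniq s -> all (fun n => a k < n)%N s -> `|\sum_(n <- s) F n| < eps k) ->
  uniq r -> {in r &, forall m m', P m -> P m' -> sh m = sh m' -> m = m'} ->
  (forall m, m \in r -> P m -> a k < sh m)%N ->
  `|\sum_(m <- r | P m) F (sh m)| < eps k.
Proof.
move=> hF ur sh_inj sh_gt; rewrite -big_filter -(big_map sh xpredT); apply: hF.
  rewrite map_inj_in_uniq ?filter_uniq // => m m'.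
  by rewrite !mem_filter => /andP[Pm mr] /andP[Pm' m'r]; apply: sh_inj.
by apply/allP => x /mapP[m]; rewrite mem_filter => /andP[Pm mr] ->; apply: sh_gt.
Qed.

Lemma label_block_bound l n j (r : seq nat) : c n = Some l -> uniq r -> n \notin r ->
  `|\sum_(m <- r | c m == Some j) iter n T (G j m)|
     <= (if (j < l)%N then eps l else eps j) *+ 2.
Proof.
move=> cn ur nr; set k := if (j < l)%N then l else j.
have -> : (if (j < l)%N then eps l else eps j) = eps k by rewrite /k; case: ifP.
have jk : (j <= k)%N by rewrite /k; case: ifP => //; lia.
have far m : m \in r -> c m == Some j -> (a k < `|n - m|)%N.
  move=> mr /eqP cm; have nm : n != m by apply: contraNneq nr => ->.
  by have := label_sep cn cm nm; rewrite /k; case: ifP; lia.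
rewrite (bigID (fun m => n < m)%N) /=.
apply: le_trans (ler_normD _ _) _; rewrite mulr2n; apply: lerD; apply: ltW.
- rewrite (eq_bigr (fun m => G j (m - n))) => [|m /andP[_ nm]]; last first.
    by rewrite iter_backward // ltnW.
  apply: tail_bound_shift ur _ _
    => [s us hs|m m' _ _ /andP[_ nm] /andP[_ nm']|m mr /andP[cm nm]].
  + exact: (G_tail jk us hs).1.
  + lia.
  + by have := far m mr cm; lia.
- rewrite (eq_bigr (fun m => iter (n - m) T (G j 0))) => [|m /andP[_ nm]]; last first.
    by rewrite [LHS]iter_forward // leqNgt.
  apply: tail_bound_shift ur _ _
    => [s us hs|m m' _ _ /andP[_ nm] /andP[_ nm']|m mr /andP[cm nm]].
  + exact: (G_tail jk us hs).2.
  + lia.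
  + by have := far m mr cm; lia.
Qed.

Lemma partial_sum_bound p q (w : K) J : 0 <= w ->
  (forall j s, (j < J)%N -> uniq s -> all (fun m => p <= m)%N s ->
     `|\sum_(m <- s) G j m| <= w) ->
  `|\sum_(p <= m < q) orbit_term m| <= w *+ J + eps J *+ 2.
Proof.
move=> w_ge0 hw; rewrite /orbit_term (@sum_by_label _ c G _ q); last first.
  by move=> m j; rewrite mem_index_iota => /andP[_ mq] /label_gt; lia.
apply: le_trans (ler_norm_sum _ _ _) _.
apply: le_trans _ (sum_capped_geometric J q w_ge0).
apply: ler_sum => j _.
rewrite -big_filter.
have us : uniq [seq m <- index_iota p q | c m == Some (j : nat)].
  by rewrite filter_uniq // iota_uniq.
case: ifP => jJ.
  by apply: hw => //; apply/allP => m; rewrite mem_filter mem_index_iota; lia.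
apply/ltW/(G_tail (leqnn j) us _).1.
by apply/allP => m; rewrite mem_filter => /andP[/eqP /label_gt[]].
Qed.

Hypothesis G_uncond : forall i, uncond_conv (G i).
Hypothesis eps_small : forall e : K, 0 < e -> exists J, eps J *+ 2 < e.

Lemma cvg_orbit_series : cvgn (series orbit_term).
Proof.
apply/cauchy_cvgP/cauchy_seriesP => e e_gt0.
have e2_gt0 : 0 < e / 2 by rewrite divr_gt0.
have [J hJ] := eps_small e2_gt0.
set w := e / 2 / J.+1%:R.
have w_gt0 : 0 < w by rewrite divr_gt0 // ltr0n.
pose M j := sval (cid (G_uncond j w_gt0)).
have hM j := svalP (cid (G_uncond j w_gt0)).
set p0 := (\max_(j < J) M j)%N.
exists ([set n | (p0 < n)%N], [set n | (p0 < n)%N]); first by split; exists p0.+1.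
case=> p q [/= p0p _].
apply: le_lt_trans (@partial_sum_bound p q w J (ltW w_gt0) _) _.
  move=> j s jJ us ps; apply/ltW/hM => //; apply/allP => m ms.
  have Mj : (M j <= p0)%N by exact: (@leq_bigmax _ (fun i : 'I_J => M i) (Ordinal jJ)).
  by apply: leq_ltn_trans Mj (leq_trans p0p (allP ps m ms)).
have hw : w *+ J <= e / 2.
  apply: le_trans (ler_wpMn2l (ltW w_gt0) (leqnSn J)) _.
  by rewrite -[w *+ _]mulr_natr /w divfK // pnatr_eq0.
by rewrite [X in _ < X](splitr e); apply: ler_ltD.
Qed.

Lemma iter_partial_sum_near l n q : c n = Some l -> (n < q)%N ->
  `|G l 0 - iter n T (series orbit_term q)| <= eps l *+ (2 * l + 4).
Proof.
move=> cn nq.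
rewrite /series /= iter_linear_sum (bigD1_seq n) /= ?mem_index_iota ?iota_uniq //.
have -> : iter n T (orbit_term n) = G l 0 by rewrite /orbit_term cn iter_backward // subnn.
rewrite opprD addrA subrr add0r normrN -big_filter.
set r := [seq i <- index_iota 0 q | i != n].
rewrite (eq_bigr (fun i => if c i is Some j then iter n T (G j i) else 0)); last first.
  by move=> i _; rewrite /orbit_term; case: (c i) => [j|] //; rewrite iter_linear0.
rewrite (@sum_by_label _ c (fun j i => iter n T (G j i)) r q); last first.
  by move=> m j; rewrite mem_filter mem_index_iota => /andP[_ /andP[_ mq]] /label_gt; lia.
apply: le_trans (ler_norm_sum _ _ _) _.
have ur : uniq r by rewrite filter_uniq // iota_uniq.
have nr : n \notin r by rewrite mem_filter eqxx.
apply: (@le_trans _ _ (\sum_(j < q) (if (j < l)%N then eps l else eps j) *+ 2)).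
  by apply: ler_sum => j _; apply: label_block_bound.
rewrite sumrMnl.
apply: le_trans (ler_wMn2r 2 (sum_capped_geometric l q (ltW (eps_gt0 l)))) _.
by rewrite -mulrnDr -mulrnA; apply: ler_wpMn2l; [exact: ltW | lia].
Qed.

Theorem exists_labelled_approximant : exists f : X, forall l n, c n = Some l ->
  forall r : K, eps l *+ (2 * l + 4) < r -> `|G l 0 - iter n T f| < r.
Proof.
exists (limn (series orbit_term)) => l n cn r hr; set f := limn _.
set b := eps l *+ (2 * l + 4).
have [b_mid mid_r] := midf_lt hr; set b' := (b + r) / 2 in b_mid mid_r.
have hT : (iter n T \o series orbit_term) x @[x --> \oo] --> iter n T f.
  by apply: continuous_cvg; [exact: continuous_iter | exact: cvg_orbit_series].
have cl : closure (ball (G l 0) b') (iter n T f).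
  apply: (closed_cvg _ (@closed_closure _ _) _ _ hT).
  exists n.+1 => // q /= nq; apply: subset_closure.
  by rewrite -ball_normE /ball_ /=; apply: le_lt_trans b_mid; exact: iter_partial_sum_near.
have rb_gt0 : 0 < r - b' by rewrite subr_gt0.
have [z [hz1 hz2]] := cl _ (nbhsx_ballx (iter n T f) _ rb_gt0).
move: hz1 hz2; rewrite -!ball_normE /ball_ /= => hz1 hz2.
apply: le_lt_trans (ler_distD z _ _) _.
by rewrite -[r](subrK b') addrC; apply: ltrD => //; rewrite distrC.
Qed.

End OrbitSeries.

Section ToleranceSequence.
Variable K : numFieldType.

(* Chosen so that [tolerance k *+ (2 * k + 4) = 2 ^- k.+1]. *)
Definition tolerance k : K := ((k.+2 * 2 ^ k.+2)%:R)^-1.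

Lemma tolerance_den_gt0 k : (0 < k.+2 * 2 ^ k.+2)%N.
Proof. by rewrite muln_gt0 expn_gt0. Qed.

Lemma tolerance_gt0 k : 0 < tolerance k.
Proof. by rewrite invr_gt0 ltr0n tolerance_den_gt0. Qed.

Lemma tolerance_MnE k n : tolerance k *+ n = n%:R / (k.+2 * 2 ^ k.+2)%:R.
Proof. by rewrite mulrC mulr_natr. Qed.

Lemma ler_natdiv (m n p q : nat) : (0 < n)%N -> (0 < q)%N -> (m * q <= p * n)%N ->
  (m%:R / n%:R : K) <= p%:R / q%:R.
Proof.
move=> n_gt0 q_gt0 h.
by rewrite ler_pdivrMr ?ltr0n // mulrAC ler_pdivlMr ?ltr0n // -!natrM ler_nat.
Qed.

Lemma tolerance_half k : tolerance k.+1 *+ 2 <= tolerance k.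
Proof.
rewrite -[tolerance k]mulr1n !tolerance_MnE ler_natdiv ?tolerance_den_gt0 //.
by rewrite !expnS; nia.
Qed.

Lemma tolerance_bound k : tolerance k *+ (2 * k + 4) <= k.+1%:R^-1.
Proof.
have -> : k.+1%:R^-1 = 1%:R / k.+1%:R :> K by rewrite div1r.
rewrite tolerance_MnE ler_natdiv ?tolerance_den_gt0 //.
by have := ltn_expl k.+1 (ltnSn 1); rewrite !expnS; nia.
Qed.

Lemma tolerance_small : (forall e : K, 0 < e -> exists m : nat, m.+1%:R^-1 < e) ->
  forall e : K, 0 < e -> exists J, tolerance J *+ 2 < e.
Proof.
move=> arch e e_gt0; have [m hm] := arch e e_gt0; exists m.
apply: le_lt_trans hm; apply: le_trans (tolerance_bound m).
by apply: ler_wpMn2l; [exact/ltW/tolerance_gt0 | lia].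
Qed.

End ToleranceSequence.

Lemma scal_archimedean (R : realType) (b : bool) (e : scal R b) :
  0 < e -> exists m : nat, m.+1%:R^-1 < e.
Proof.
have archR (r : R) : 0 < r -> exists m : nat, m.+1%:R^-1 < r.
  move=> r_gt0; have [N _ hN] := near_infty_natSinv_lt (PosNum r_gt0).
  by exists N; apply: (hN N) => /=.
case: b e => /= e; last exact: archR.
move=> e_gt0; have Re_gt0 : 0 < complex.Re e by move: e_gt0; rewrite ltcE => /andP[].
have [m hm] := archR _ Re_gt0; exists m.
have -> : e = (complex.Re e)%:C%C by rewrite RRe_real // gtr0_real.
by rewrite -(rmorph_nat (real_complex R)) -fmorphV ltcR.
Qed.

Lemma separable_dense_seq (K : numFieldType) (X : normedModType K) (X0 : set X) :
  (forall e : K, 0 < e -> exists m : nat, m.+1%:R^-1 < e) ->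
  separable_space X -> dense X0 ->
  exists y : nat -> X, (forall j, X0 (y j)) /\
    forall x e, 0 < e -> exists j, `|x - y j| < e /\ j.+1%:R^-1 < e.
Proof.
move=> arch [S [S_count S_dense]] X0_dense.
have [s S_sub] := pcard_surjP S_count.
have near_X0 j : exists y, X0 y /\ `|s (logn 2 j) - y| < j.+1%:R^-1.
  have rho_gt0 : 0 < j.+1%:R^-1 :> K by rewrite invr_gt0 ltr0n.
  have [y [sy X0y]] := X0_dense (ball (s (logn 2 j)) j.+1%:R^-1)
    (ex_intro _ _ (ballxx _ rho_gt0)) (ball_open _ _).
  by exists y; split => //; move: sy; rewrite -ball_normE.
have [y hy] := choice near_X0; exists y; split => [j|x e e_gt0]; first exact: (hy j).1.
have e2_gt0 : 0 < e / 2 by rewrite divr_gt0.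
have [z [xz Sz]] := S_dense (ball x (e / 2)) (ex_intro _ _ (ballxx x e2_gt0))
  (ball_open _ _).
have [i _ siz] := S_sub z Sz.
have [m hm] := arch _ e2_gt0.
(* Every [i] is [logn 2 j] for the arbitrarily large [j = (2m+1) 2^i]. *)
pose j := ((2 * m + 1) * 2 ^ i)%N.
have log_j : logn 2 j = i.
  by rewrite /j logn_Gauss ?pfactorK // coprime2n addn1 oddS oddM.
have small_j : j.+1%:R^-1 < e / 2.
  apply: le_lt_trans hm; rewrite lef_pV2 ?posrE ?ltr0n // ler_nat ltnS.
  by rewrite /j -[m]muln1 (leq_mul _ (expn_gt0 2 i)) //; lia.
exists j; split; last by apply: lt_trans small_j _; rewrite ltr_pdivrMr // ltr_pMr ?ltr1n.
move: xz; rewrite -ball_normE /ball_ /= => xz.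
apply: le_lt_trans (ler_distD z _ _) _; rewrite [e]splitr ltrD //.
by apply: lt_trans small_j; rewrite -siz -log_j; exact: (hy j).2.
Qed.

Lemma uncond_conv_tail_index (K : numFieldType) (X : normedModType K)
    (u : nat -> nat -> X) (eps : nat -> K) :
  (forall k, 0 < eps k) -> (forall i, uncond_conv (u i)) ->
  exists a : nat -> nat, forall k i, (i <= k)%N -> forall s, uniq s ->
    all (fun n => a k < n)%N s -> `|\sum_(n <- s) u i n| < eps k.
Proof.
move=> eps_gt0 u_conv.
have [N hN] := choice (fun ik : nat * nat => u_conv ik.1 _ (eps_gt0 ik.2)).
exists (fun k => \max_(i < k.+1) N (i : nat, k))%N => k i ik s us s_gt.
apply: (hN (i, k)) => //; apply/allP => n ns; apply: leq_ltn_trans (allP s_gt n ns).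
exact: (@leq_bigmax _ (fun i : 'I_k.+1 => N (i : nat, k)) (Ordinal (ik : (i < k.+1)%N))).
Qed.

Theorem frequent_hypercyclicity_criterion (R : realType) (K : numFieldType)
    (X : completeNormedModType K) (T : {linear X -> X}) (X0 : set X) :
  (forall e : K, 0 < e -> exists m : nat, m.+1%:R^-1 < e) ->
  separable_space X -> continuous T -> dense X0 ->
  (forall x, X0 x -> uncond_conv (fun n => iter n T x)) ->
  (forall x, X0 x -> exists g : nat -> X,
     [/\ g 0%N = x, forall k, T (g k.+1) = g k & uncond_conv g]) ->
  freq_hypercyclic R setT T.
Proof.
move=> arch sepX T_cont X0_dense fwd_conv back_orbit.
have [y [X0y y_approx]] := separable_dense_seq arch sepX X0_dense.
have [G hG] := choice (fun j => back_orbit _ (X0y j)).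
have [G0 G_back G_conv] : [/\ forall j, G j 0%N = y j,
    forall j k, T (G j k.+1) = G j k & forall j, uncond_conv (G j)].
  by split=> j; case: (hG j).
have T_conv j : uncond_conv (fun n => iter n T (G j 0%N)) by rewrite G0; exact: fwd_conv.
pose eps := @tolerance K.
have [aG hG_tail] := uncond_conv_tail_index (@tolerance_gt0 K) G_conv.
have [aT hT_tail] := uncond_conv_tail_index (@tolerance_gt0 K) T_conv.
pose a k := maxn (aG k) (aT k).
have G_tail k i : (i <= k)%N -> forall s, uniq s -> all (fun n => a k < n)%N s ->
    `|\sum_(n <- s) G i n| < eps k /\ `|\sum_(n <- s) iter n T (G i 0%N)| < eps k.
  move=> ik s us s_gt; split; [apply: hG_tail | apply: hT_tail] => //;
    by apply/allP => n /(allP s_gt); apply: leq_ltn_trans; rewrite ?leq_maxl ?leq_maxr.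
have [c [c_dens c_gt c_sep]] := exists_separated_labelling R a.
have [f hf] := exists_labelled_approximant T_cont G_back (@tolerance_gt0 K)
  (@tolerance_half K) G_tail c_gt c_sep G_conv (tolerance_small arch).
exists f; split=> //; split=> // U U_open [x Ux].
have /nbhs_ballP[e e_gt0 xeU] : nbhs x U by apply: open_nbhs_nbhs.
have [j [x_yj small_j]] := y_approx x (e / 2) (divr_gt0 e_gt0 (ltr0Sn _ 1)).
apply: (lt_le_trans (c_dens j)); apply: le_lower_density => n /= cn.
apply: xeU; rewrite -ball_normE /ball_ /=.
apply: le_lt_trans (ler_distD (y j) _ _) _; rewrite [e]splitr ltrD // -G0.
by apply: hf cn _ (le_lt_trans (tolerance_bound _ j) small_j).
Qed.

Theorem corollary2p3 (R : realType) (b : bool)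
    (X : completeNormedModType (scal R b))
    (D : set X) (A : X -> X) (X0 : set X) (B : X -> X)
    (Ainv : {linear X -> X}) :
  infinite_dimensional X ->
  separable_space X ->
  linear_operator D A ->
  dense D ->
  (forall r : nat, (1 <= r)%N -> closed_operator (dom_pow D A r) (iter r A)) ->
  dense X0 ->
  (forall x, X0 x -> forall n : nat, dom_pow D A n x) ->
  (forall x, X0 x -> X0 (B x)) ->
  (forall x, X0 x -> A (B x) = x) ->
  (forall x, X0 x -> uncond_conv (fun n => iter n A x)) ->
  (forall x, X0 x -> uncond_conv (fun n => iter n B x)) ->
  (forall x y, D x -> D y -> A x = A y -> x = y) ->
  continuous Ainv ->
  (forall y, D (Ainv y) /\ A (Ainv y) = y) ->
  (forall x, D x -> Ainv (A x) = x) ->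
  freq_hypercyclic R setT Ainv.
Proof.
move=> _ sepX _ _ _ X0_dense X0_dom X0_B AB A_conv B_conv _ Ainv_cont _ Ainv_A.
have X0_D x : X0 x -> D x by move=> /X0_dom/(_ 1%N 0%N erefl).
have Ainv_iter x : X0 x -> (fun n => iter n Ainv x) = (fun n => iter n B x).
  move=> X0x; apply/funext; elim=> [//|n /= ->].
  have X0Bn : X0 (iter n B x) by elim: n => [|n IH] //=; exact: X0_B IH.
  by rewrite -[in LHS](AB _ X0Bn) Ainv_A //; apply/X0_D/X0_B.
apply: (frequent_hypercyclicity_criterion R (@scal_archimedean R b) sepX Ainv_cont X0_dense).
  by move=> x X0x; rewrite Ainv_iter //; exact: B_conv.
move=> x X0x; exists (fun k => iter k A x); split => // [k|]; last exact: A_conv.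
by rewrite iterS Ainv_A //; exact: X0_dom X0x k.+1 k (ltnSn k).
Qed.
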